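(* Let $\mu$ be a probability distribution supported in the unit square $[0,1]^2$, let $\mu_n$ be an empirical distribution of $\mu$ on $n$ samples, let $\alpha\ge 0$, and let $\mathcal{G}$ be a grid partitioning $[0,1]^2$ into axis-aligned square cells of side length $n^{-\alpha}$. Then with high probability $\mathrm{Exc}_\mu(\mathcal{G})=\tilde O(n^{\alpha-1/2})$.
   Context: For a cell $\Box$ of $\mathcal{G}$, $\mu(\Box)$ and $\mu_n(\Box)$ denote the mass of $\mu$ and $\mu_n$ in $\Box$. The excess of a cell is $\mathrm{Exc}_\mu(\Box)=\max\{0,\mu(\Box)-\mu_n(\Box)\}$ and the excess of the grid is $\mathrm{Exc}_\mu(\mathcal{G})=\sum_{\Box\in\mathcal{G}}\mathrm{Exc}_\mu(\Box)$. An empirical distribution $\mu_n$ is $\frac1n\sum_{i=1}^n\delta_{x_i}$ with $x_1,\dots,x_n$ i.i.d. from $\mu$. $\tilde O(\cdot)$ hides polylogarithmic factors in $n$; ''with high probability'' means with probability at least $1-n^{-c}$ for some constant $c>0$. *)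

From HB Require Import structures.
From mathcomp Require Import all_boot all_order all_algebra.
From mathcomp Require Import all_classical all_reals all_analysis.
Set Implicit Arguments. Unset Strict Implicit. Unset Printing Implicit Defensive.
Import Order.TTheory GRing.Theory Num.Theory.
Import numFieldNormedType.Exports.
Local Open Scope classical_set_scope.
Local Open Scope ring_scope.

Section Grid.
Variable R : realType.

Definition unit_square : set (R * R) :=
  [set p | (0 <= p.1 <= 1) /\ (0 <= p.2 <= 1)].

Definition grid_side (n : nat) (alpha : R) : R := (n%:R) `^ (- alpha).

Definition grid_count (n : nat) (alpha : R) : nat :=
  `|Num.ceil ((grid_side n alpha)^-1)|%N.

(* index of the column (row) containing coordinate x in [0,1]; the last
   column is closed on the right (and possibly truncated by the boundary) *)
Definition grid_idx (n : nat) (alpha : R) (x : R) : nat :=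
  minn `|Num.floor (x / grid_side n alpha)|%N (grid_count n alpha).-1.

Definition grid_cell (n : nat) (alpha : R) (i j : nat) : set (R * R) :=
  [set p | unit_square p /\ grid_idx n alpha p.1 = i /\ grid_idx n alpha p.2 = j].

Definition empirical_mass (n : nat) (xs : 'I_n -> R * R) (C : set (R * R)) : R :=
  (n%:R)^-1 * \sum_(i < n) \1_C (xs i).

Definition grid_excess (mu : set (R * R) -> \bar R) (n : nat) (alpha : R)
    (xs : 'I_n -> R * R) : R :=
  \sum_(i < grid_count n alpha) \sum_(j < grid_count n alpha)
    Num.max 0 (fine (mu (grid_cell n alpha i j)) -
               empirical_mass xs (grid_cell n alpha i j)).
End Grid.

Definition iid_sample (R : realType) (d : measure_display) (Omega : measurableType d)
    (P : probability Omega R) (mu : probability (R * R)%type R) (n : nat)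
    (X : 'I_n -> Omega -> R * R) : Prop :=
  (forall i, measurable_fun setT (X i)) /\
  (forall i (B : set (R * R)), measurable B -> P (X i @^-1` B) = mu B) /\
  (forall B : 'I_n -> set (R * R), (forall i, measurable (B i)) ->
     P (\bigcap_(i in [set: 'I_n]) (X i @^-1` B i)) =
     (\prod_(i < n) P (X i @^-1` B i))%E).

From HB Require Import structures.
From mathcomp Require Import all_boot all_order all_algebra.
From mathcomp Require Import all_classical all_reals all_analysis.
From mathcomp Require Import ring lra zify.
Set Implicit Arguments. Unset Strict Implicit. Unset Printing Implicit Defensive.
Import Order.TTheory GRing.Theory Num.Theory.
Import numFieldNormedType.Exports.
Local Open Scope classical_set_scope.
Local Open Scope ring_scope.

(* For a cell C of mass p, the set of samples falling in C is a pattern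
   f : {ffun 'I_n -> bool} of probability \prod_i (if f i then p else 1 - p),
   and the exponential Markov inequality over these patterns (Chernoff) gives
   P (p - mu_n C > t p + D) <= exp (- n t D) for all t >= 0.  With
   t = n^(alpha - 1/2) and D = K ln n / (t n), K = 2 alpha + 3, each of the
   at most 4 n^(2 alpha) cells fails with probability n^-K, so all cells are
   good with probability >= 1 - 4 n^-3 >= 1 - 1/n, and then
   Exc <= t * sum_C p + #cells * D <= t + 4 K t ln n. *)

Lemma expRN_le_quadratic (R : realType) (l : R) : 0 <= l -> expR (- l) <= 1 - l + l ^+ 2.
Proof.
move=> l0.
have sq_le : (1 + l / 2) ^+ 2 <= expR l.
  have -> : expR l = expR (l / 2) ^+ 2 by rewrite -expRM_natl; congr expR; field.
  by rewrite lerXn2r ?nnegrE ?expR_ge0 ?expR_ge1Dx//; lra.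
rewrite expRN -(ler_pM2r (expR_gt0 l)) mulVf ?gt_eqF ?expR_gt0//.
have : 0 < 1 - l + l ^+ 2 by nra.
nra.
Qed.

Section bernoulli_patterns.
Variables (R : realType) (n : nat).
Implicit Types (p l a : R) (f : {ffun 'I_n -> bool}).

Definition pattern_weight p f : R := \prod_(i < n) (if f i then p else 1 - p).

Definition pattern_count f : R := \sum_(i < n) (f i)%:R.

Lemma pattern_weight_ge0 p f : 0 <= p <= 1 -> 0 <= pattern_weight p f.
Proof. by move=> p01; apply: prodr_ge0 => i _; case: (f i); lra. Qed.

Lemma sum_pattern_weight_expR p l :
  \sum_f pattern_weight p f * expR (- (l * pattern_count f)) =
  (p * expR (- l) + (1 - p)) ^+ n.
Proof.
transitivity (\prod_(i < n) \sum_(b : bool) (if b then p * expR (- l) else 1 - p)).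
  rewrite bigA_distr_bigA /=; apply: eq_bigr => f _.
  rewrite mulr_sumr -sumrN expR_sum -big_split /=.
  by apply: eq_bigr => i _; case: (f i); rewrite ?mulr1 ?mulr0 ?oppr0 ?expR0 ?mulr1.
by rewrite prodr_const card_ord big_bool.
Qed.

Lemma bernoulli_mgf_le p l : 0 <= p <= 1 -> 0 <= l ->
  p * expR (- l) + (1 - p) <= expR (- (p * l) + p * l ^+ 2).
Proof.
move=> p01 l0; apply: le_trans (expR_ge1Dx _).
by have := @expRN_le_quadratic R l l0; nra.
Qed.

Lemma pattern_lower_tail p l a (Q : pred {ffun 'I_n -> bool}) :
  0 <= p <= 1 -> 0 <= l -> (forall f, Q f -> pattern_count f <= a) ->
  \sum_(f | Q f) pattern_weight p f <= expR (l * a) * (p * expR (- l) + (1 - p)) ^+ n.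
Proof.
move=> p01 l0 Qa; rewrite -sum_pattern_weight_expR mulr_sumr.
rewrite [leRHS](bigID Q) /= -[leLHS]addr0; apply: lerD.
  apply: ler_sum => f /Qa fa.
  rewrite mulrCA -expRD -[leLHS]mulr1 ler_wpM2l ?pattern_weight_ge0//.
  by rewrite -expR0 ler_expR -mulrBr mulr_ge0// subr_ge0.
apply: sumr_ge0 => f _.
by rewrite mulr_ge0 ?expR_ge0 ?mulr_ge0 ?pattern_weight_ge0.
Qed.

Lemma pattern_deficit_tail p t D : (0 < n)%N -> 0 <= p <= 1 -> 0 <= t ->
  \sum_(f | t * p + D < p - pattern_count f / n%:R) pattern_weight p f <=
    expR (- (n%:R * t * D)).
Proof.
move=> n0 p01 t0.
have nR0 : 0 < n%:R :> R by rewrite ltr0n.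
(* Chernoff with l := t; the exponent t a - n p t + n p t^2 collapses to - n t D. *)
apply: le_trans (@pattern_lower_tail p t (n%:R * (p - t * p - D))
  (fun f => t * p + D < p - pattern_count f / n%:R) p01 t0 _) _.
  move=> f /ltW fD; rewrite -ler_pdivrMl //; lra.
apply: le_trans (ler_wpM2l (expR_ge0 _)
  (_ : _ <= expR (- (p * t) + p * t ^+ 2) ^+ n)) _.
  rewrite lerXn2r ?nnegrE ?expR_ge0 ?bernoulli_mgf_le//.
  by have := expR_ge0 (- t); nra.
rewrite -expRM_natl -expRD ler_expR; nra.
Qed.
End bernoulli_patterns.
Arguments pattern_count {R n}.

Lemma fsbigE_fintype (R : realType) (T : finType) (A : set T) (F : T -> \bar R) :
  (\sum_(i \in A) F i = \sum_(i | i \in A) F i)%E.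
Proof.
rewrite (bigfs _ _ (r := index_enum T)) ?index_enum_uniq ?set_mem_set //.
by move=> i _; rewrite mem_index_enum.
Qed.

Lemma fine_probability_itv (R : realType) d (T : measurableType d)
    (mu : probability T R) (A : set T) :
  measurable A -> 0 <= fine (mu A) <= 1.
Proof.
move=> mA; rewrite fine_ge0 //=.
by rewrite -lee_fin fineK ?fin_num_measure ?probability_le1.
Qed.

Section sample_patterns.
Variables (R : realType) (d : measure_display) (Omega : measurableType d)
  (P : probability Omega R) (mu : probability (R * R)%type R) (n : nat)
  (X : 'I_n -> Omega -> R * R).
Hypothesis X_iid : iid_sample P mu X.
Implicit Types (C : set (R * R)) (f : {ffun 'I_n -> bool}).

Definition hits C (w : Omega) : {ffun 'I_n -> bool} := [ffun i => X i w \in C].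

Let side_event C f i : set Omega := X i @^-1` (if f i then C else ~` C).

Lemma hits_preimage1 C f :
  hits C @^-1` [set f] = \bigcap_(i in [set: 'I_n]) side_event C f i.
Proof.
apply/seteqP; split => w /=.
  move=> <- i _; rewrite /side_event ffunE /=.
  by case: ifPn => [/set_mem | /negP Cw] //= /mem_set.
move=> hw; apply/ffunP => i; rewrite ffunE; have := hw i I.
by rewrite /side_event /=; case: (f i) => /= Cw; [rewrite mem_set | rewrite memNset].
Qed.

Lemma measurable_side_event C f i : measurable C -> measurable (side_event C f i).
Proof.
move=> mC; rewrite -[side_event _ _ _]setTI; apply: (X_iid.1 i) => //.
by case: (f i) => //; apply: measurableC.
Qed.

Lemma measurable_hits1 C f : measurable C -> measurable (hits C @^-1` [set f]).
Proof.
move=> mC; rewrite hits_preimage1.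
by apply: fin_bigcap_measurable => // i _; apply: measurable_side_event.
Qed.

Lemma probability_hits1 C f : measurable C ->
  P (hits C @^-1` [set f]) = (pattern_weight (fine (mu C)) f)%:E.
Proof.
move=> mC; rewrite hits_preimage1 X_iid.2.2; last first.
  by move=> i; case: (f i) => //; apply: measurableC.
rewrite -prodEFin; apply: eq_bigr => i _.
have muC : mu C = (fine (mu C))%:E by rewrite fineK ?fin_num_measure.
rewrite X_iid.2.1; last by case: (f i) => //; apply: measurableC.
by case: (f i); rewrite ?probability_setC // muC.
Qed.

Lemma hits_preimage C (A : set {ffun 'I_n -> bool}) :
  hits C @^-1` A = \bigcup_(f in A) hits C @^-1` [set f].
Proof. by rewrite -preimage_bigcup bigcup_imset1 image_id. Qed.

Lemma measurable_hits C (A : set {ffun 'I_n -> bool}) :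
  measurable C -> measurable (hits C @^-1` A).
Proof.
move=> mC; rewrite hits_preimage.
by apply: fin_bigcup_measurable => // f _; apply: measurable_hits1.
Qed.

Lemma probability_hits C (A : set {ffun 'I_n -> bool}) : measurable C ->
  P (hits C @^-1` A) = (\sum_(f | f \in A) pattern_weight (fine (mu C)) f)%:E.
Proof.
move=> mC; rewrite hits_preimage measure_fin_bigcup //; last 3 first.
- exact: finite_finset.
- exact: trivIset_preimage1.
- by move=> f _; apply: measurable_hits1.
rewrite fsbigE_fintype -sumEFin.
by apply: eq_bigr => f _; apply: probability_hits1.
Qed.

Lemma empirical_mass_hits C w :
  empirical_mass (X^~ w) C = pattern_count (hits C w) / n%:R.
Proof.
rewrite /empirical_mass mulrC; congr (_ * _).
by apply: eq_bigr => i _; rewrite indicE ffunE.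
Qed.

Definition deficit_event C (t D : R) : set Omega :=
  [set w | t * fine (mu C) + D < fine (mu C) - empirical_mass (X^~ w) C].

Lemma deficit_event_hits C t D : deficit_event C t D =
  hits C @^-1` [set f | t * fine (mu C) + D < fine (mu C) - pattern_count f / n%:R].
Proof. by apply/seteqP; split => w; rewrite /deficit_event /= empirical_mass_hits. Qed.

Lemma measurable_deficit_event C t D :
  measurable C -> measurable (deficit_event C t D).
Proof. by move=> mC; rewrite deficit_event_hits; apply: measurable_hits. Qed.

Lemma probability_deficit_event_le C t D : (0 < n)%N -> 0 <= t -> measurable C ->
  (P (deficit_event C t D) <= (expR (- (n%:R * t * D)))%:E)%E.
Proof.
move=> n0 t0 mC; rewrite deficit_event_hits probability_hits // lee_fin.
under eq_bigl do rewrite mem_setE.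
exact: pattern_deficit_tail n0 (fine_probability_itv mu mC) t0.
Qed.

Lemma probability_no_deficit (I : finType) (C : I -> set (R * R)) t D :
  (0 < n)%N -> 0 <= t -> (forall c, measurable (C c)) ->
  1 - #|I|%:R * expR (- (n%:R * t * D)) <=
    fine (P (\bigcap_(c in [set: I]) ~` deficit_event (C c) t D)).
Proof.
move=> n0 t0 mC.
have mdef c : measurable (deficit_event (C c) t D).
  exact: measurable_deficit_event.
have mU : measurable (\bigcup_(c in [set: I]) deficit_event (C c) t D).
  by apply: fin_bigcup_measurable => [|c _]; [exact: finite_finset | exact: mdef].
have union_bound : (P (\bigcup_(c in [set: I]) deficit_event (C c) t D) <=
    (#|I|%:R * expR (- (n%:R * t * D)))%:E)%E.
  apply: le_trans (content_sub_fsum (D := [set: I]) P finite_finset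
    (fun c _ => mdef c) mU (@subset_refl _ _)) _.
  rewrite fsbigE_fintype; under eq_bigl do rewrite in_setT.
  apply: le_trans (lee_sum _ (fun c _ => probability_deficit_event_le D n0 t0 (mC c))) _.
  by rewrite sumEFin sumr_const lee_fin [leRHS]mulr_natl.
rewrite -setC_bigcup probability_setC // fineB ?fin_num_measure //= lerD2l lerN2.
by rewrite -lee_fin fineK ?fin_num_measure.
Qed.

End sample_patterns.

Lemma sum_fine_trivIset_le1 (R : realType) d (T : measurableType d)
    (mu : probability T R) (I : finType) (F : I -> set T) :
  (forall i, measurable (F i)) -> trivIset setT F -> \sum_i fine (mu (F i)) <= 1.
Proof.
move=> mF tF; rewrite -lee_fin -sumEFin.
under eq_bigr do rewrite fineK ?fin_num_measure //.
have mU : measurable (\bigcup_(i in [set: I]) F i).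
  by apply: fin_bigcup_measurable => //; apply: finite_finset.
apply: le_trans (probability_le1 mu mU).
rewrite measure_fin_bigcup ?fsbigE_fintype //; last exact: finite_finset.
by under [leRHS]eq_bigl do rewrite in_setT.
Qed.

Section grid_cells.
Variables (R : realType) (n : nat) (alpha : R).
Hypothesis n_gt0 : (0 < n)%N.

Let m := grid_count n alpha.

Lemma grid_side_gt0 : 0 < grid_side n alpha.
Proof. by rewrite powR_gt0 // ltr0n. Qed.

Lemma le_grid_idx k (x : R) : 0 <= x ->
  (k <= grid_idx n alpha x)%N =
    (k <= m.-1)%N && (k%:R * grid_side n alpha <= x).
Proof.
move=> x0; rewrite leq_min andbC; congr (_ && _).
have s0 := grid_side_gt0.
have floor_ge0 : (0 <= Num.floor (x / grid_side n alpha))%R.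
  by rewrite floor_ge0 divr_ge0 // ltW.
by rewrite -lez_nat gez0_abs // floor_ge_int -ler_pdivlMr // -natz.
Qed.

Lemma measurable_grid_idx_ge k :
  measurable [set x : R | 0 <= x /\ (k <= grid_idx n alpha x)%N].
Proof.
have s0 := grid_side_gt0.
have -> : [set x : R | 0 <= x /\ (k <= grid_idx n alpha x)%N] =
    if (k <= m.-1)%N then [set` `[k%:R * grid_side n alpha, +oo[] else set0.
  apply/seteqP; split => x /=; case: ifP => km /=; rewrite ?in_itv /= ?andbT.
  - by move=> [x0]; rewrite le_grid_idx // km.
  - by move=> [x0]; rewrite le_grid_idx // km.
  - move=> kx; have x0 : 0 <= x by apply: le_trans kx; rewrite mulr_ge0 // ltW.
    by rewrite le_grid_idx // km kx.
  - by [].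
by case: ifP => _ //; apply: measurable_itv.
Qed.

Definition grid_strip (i : nat) : set R :=
  [set x | 0 <= x <= 1 /\ grid_idx n alpha x = i].

Lemma measurable_grid_strip i : measurable (grid_strip i).
Proof.
have -> : grid_strip i = [set` `[0, 1]] `&`
    ([set x | 0 <= x /\ (i <= grid_idx n alpha x)%N] `\`
     [set x | 0 <= x /\ (i.+1 <= grid_idx n alpha x)%N]).
  apply/seteqP; split => x /=; rewrite /grid_strip in_itv /=.
    by move=> [/andP[x0 x1] <-]; rewrite x0 x1 leqnn ltnn; split => //; split => // -[].
  move=> [/andP[x0 x1] [[_ ge_i] lt_i]]; split; first by rewrite x0.
  by apply/eqP; rewrite eqn_leq ge_i andbT leqNgt; apply/negP => ?; apply: lt_i.
apply: measurableI; first exact: measurable_itv.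
by apply: measurableD; apply: measurable_grid_idx_ge.
Qed.

Lemma grid_cell_setX i j : grid_cell n alpha i j = grid_strip i `*` grid_strip j.
Proof.
by apply/seteqP; split => -[x y]; rewrite /grid_cell /grid_strip /unit_square /=; tauto.
Qed.

Lemma measurable_grid_cell i j : measurable (grid_cell n alpha i j).
Proof. by rewrite grid_cell_setX; apply: measurableX; apply: measurable_grid_strip. Qed.

Lemma trivIset_grid_cell :
  trivIset [set: 'I_m * 'I_m] (fun c => grid_cell n alpha c.1 c.2).
Proof.
move=> [i j] [i' j'] _ _ [[x y] [[_ [/= xi yj]] [_ [/= xi' yj']]]].
by congr pair; apply: val_inj; rewrite /= -?xi -?yj.
Qed.

Lemma grid_count_le : (m%:R : R) <= n%:R `^ alpha + 1.
Proof.
rewrite /m /grid_count /grid_side powRN invrK natr_absz ger0_norm; last first.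
  by rewrite ceil_ge0 (lt_le_trans _ (powR_ge0 _ _)) // ltrN10.
by have := ceilB1_lt (n%:R `^ alpha); rewrite intrB /=; lra.
Qed.

Lemma grid_excess_le (mu : probability (R * R)%type R) (xs : 'I_n -> R * R) t D :
  0 <= t -> 0 <= D ->
  (forall i j : 'I_m, fine (mu (grid_cell n alpha i j)) -
      empirical_mass xs (grid_cell n alpha i j) <=
    t * fine (mu (grid_cell n alpha i j)) + D) ->
  grid_excess mu alpha xs <= t + (m * m)%:R * D.
Proof.
move=> t0 D0 cell_le; rewrite /grid_excess pair_big /=.
apply: (@le_trans _ _
  (\sum_(c : 'I_m * 'I_m) (t * fine (mu (grid_cell n alpha c.1 c.2)) + D))).
  apply: ler_sum => -[i j] _ /=; rewrite ge_max cell_le andbT.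
  by rewrite addr_ge0 // mulr_ge0 // fine_ge0.
rewrite big_split /= -mulr_sumr sumr_const card_prod !card_ord -[D *+ _]mulr_natl.
rewrite lerD2r ler_piMr //; apply: sum_fine_trivIset_le1 trivIset_grid_cell.
by move=> c; apply: measurable_grid_cell.
Qed.

End grid_cells.

Lemma gt0_powR_expR (R : realType) (a x : R) : 0 < a -> a `^ x = expR (x * ln a).
Proof. by move=> a0; rewrite /powR gt_eqF. Qed.

Section grid_rates.
Variables (R : realType) (alpha : R) (n : nat).
Hypotheses (alpha_ge0 : 0 <= alpha) (n_ge2 : (2 <= n)%N).

Let N : R := n%:R.
Let m := grid_count n alpha.
Let theta := N `^ (alpha - 2^-1).

Let N_gt0 : 0 < N. Proof. by rewrite ltr0n; lia. Qed.
Let N_ge2 : 2 <= N. Proof. by rewrite (ler_nat R 2 n). Qed.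
Let N_ge1 : 1 <= N. Proof. by have := N_ge2; lra. Qed.
Let lnN_ge_ln2 : ln 2 <= ln N. Proof. by rewrite ler_ln ?posrE ?N_ge2 //; lra. Qed.
Let ln2_gt0 : 0 < ln (2 : R). Proof. by rewrite ln_gt0 //; lra. Qed.

Lemma grid_count_sqr_le : (m * m)%:R <= 4 * N `^ (2 * alpha).
Proof.
have t_ge1 : 1 <= N `^ alpha.
  by have := ler_powR N_ge1 alpha_ge0; rewrite powRr0.
have m_le : m%:R <= 2 * N `^ alpha.
  by have := @grid_count_le R n alpha; lra.
rewrite (mulrC 2 alpha) powRrM powR_mulrn ?powR_ge0 // natrM.
by have := ler0n R m; nra.
Qed.

Lemma grid_failure_le : (m * m)%:R * N `^ (- (2 * alpha + 3)) <= N `^ (-1).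
Proof.
apply: le_trans (ler_wpM2r (powR_ge0 _ _) grid_count_sqr_le) _.
rewrite !gt0_powR_expR // -[4 * _ * _]mulrA -expRD.
have -> : expR (-1 * ln N) = expR (-3 * ln N) * N ^+ 2.
  by rewrite -{3}(lnK N_gt0) -expRM_natl -expRD; congr expR; ring.
have -> : 2 * alpha * ln N + - (2 * alpha + 3) * ln N = -3 * ln N by ring.
by rewrite [leLHS]mulrC ler_wpM2l ?expR_ge0 //; have := N_ge2; nra.
Qed.

Lemma grid_excess_rate_le K : 0 <= K ->
  theta + (m * m)%:R * (K * ln N / (theta * N)) <=
    ((ln 2)^-1 + 4 * K) * theta * ln N.
Proof.
move=> K_ge0.
have theta_gt0 : 0 < theta by apply: powR_gt0.
have sqr_theta : N `^ (2 * alpha) = theta ^+ 2 * N.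
  rewrite /theta !gt0_powR_expR // -expRM_natr -{3}(lnK N_gt0) -expRD.
  by congr expR; field.
have D_ge0 : 0 <= K * ln N / (theta * N).
  by rewrite divr_ge0 ?mulr_ge0 // ?ln_ge0 //; lra.
apply: (@le_trans _ _ (theta + 4 * N `^ (2 * alpha) * (K * ln N / (theta * N)))).
  by rewrite lerD2l ler_wpM2r // grid_count_sqr_le.
rewrite sqr_theta.
have -> : 4 * (theta ^+ 2 * N) * (K * ln N / (theta * N)) = 4 * K * theta * ln N.
  by field; rewrite gt_eqF ?gt_eqF.
have : 1 <= ln N / ln 2 by rewrite ler_pdivlMr // mul1r.
nra.
Qed.

End grid_rates.

Theorem lemma3p5 (R : realType) (alpha : R) : 0 <= alpha ->
  exists (c C : R) (k : nat), 0 < c /\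
  forall (mu : probability (R * R)%type R), mu (@unit_square R) = 1%E ->
  forall (d : measure_display) (Omega : measurableType d)
         (P : probability Omega R) (n : nat) (X : 'I_n -> Omega -> R * R),
    (0 < n)%N -> iid_sample P mu X ->
    exists G : set Omega, measurable G /\
      (1 - (n%:R) `^ (- c) <= fine (P G)) /\
      (forall w, G w ->
        grid_excess mu alpha (fun i => X i w)
          <= C * (n%:R) `^ (alpha - 2^-1) * (ln (n%:R)) ^+ k).
Proof.
move=> alpha_ge0; pose K := 2 * alpha + 3.
exists 1, ((ln 2)^-1 + 4 * K), 1%N; split=> // mu _ d Omega P n X n_gt0 X_iid.
have [n1|n_ge2] : n = 1%N \/ (2 <= n)%N by lia.
  by exists set0; do 2!split=> //; rewrite n1 powR1 subrr measure0.
pose m := grid_count n alpha.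
pose theta := n%:R `^ (alpha - 2^-1).
pose D := K * ln n%:R / (theta * n%:R).
have theta_gt0 : 0 < theta by rewrite powR_gt0 // ltr0n.
have K_ge0 : 0 <= K by rewrite /K; lra.
have ln_n_ge0 : 0 <= ln n%:R :> R by rewrite ln_ge0 // ler1n; lia.
have D_ge0 : 0 <= D by rewrite divr_ge0 ?mulr_ge0 // ltW.
have cell_measurable (c : 'I_m * 'I_m) := measurable_grid_cell alpha n_gt0 c.1 c.2.
exists (\bigcap_(c in [set: 'I_m * 'I_m])
  ~` deficit_event mu X (grid_cell n alpha c.1 c.2) theta D).
split; [|split].
- apply: fin_bigcap_measurable => [|c _]; first exact: finite_finset.
  by apply: measurableC; apply: (measurable_deficit_event X_iid).
- apply: le_trans (probability_no_deficit X_iid D n_gt0 (ltW theta_gt0) cell_measurable).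
  rewrite card_prod !card_ord lerD2l lerN2.
  have -> : n%:R * theta * D = K * ln n%:R.
    by rewrite /D; field; rewrite pnatr_eq0 -lt0n n_gt0 gt_eqF.
  by rewrite -mulNr -gt0_powR_expR ?ltr0n // (grid_failure_le alpha_ge0 n_ge2).
- move=> w G_w; rewrite expr1.
  apply: le_trans (grid_excess_le n_gt0 (ltW theta_gt0) D_ge0 _) _.
    move=> i j; have := G_w (i, j) I.
    by rewrite /deficit_event /= => /negP; rewrite -leNgt.
  exact: (grid_excess_rate_le alpha_ge0 n_ge2 K_ge0).
Qed.
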